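(* Let $(\Lambda,d)$ be a finitely aligned $k$-graph and let $(\overline{\Lambda},\overline d)$ be its extension as described in the context. Then for all $\lambda,\mu\in\Lambda$, $\Lambda^{\min}(\lambda,\mu)=\overline{\Lambda}^{\min}(\lambda,\mu)$.
   Context: A $k$-graph $(\Lambda,d)$ is a countable category with a degree functor $d:\Lambda\to\mathbb{N}^k$ satisfying unique factorization; $\Lambda^0$ vertices, $r,s$ range/source, $v\Lambda^n=\{\lambda:r(\lambda)=v,d(\lambda)=n\}$; $e_i$ standard basis, $\le$ coordinatewise, $\vee,\wedge$ coordinatewise max/min. For a $k$-graph $\Gamma$ and $\lambda,\mu\in\Gamma$, $\Gamma^{\min}(\lambda,\mu)=\{(\alpha,\beta)\in\Gamma\times\Gamma:\lambda\alpha=\mu\beta,\ d(\lambda\alpha)=d(\lambda)\vee d(\mu)\}$; $\Gamma$ is finitely aligned if all these sets are finite. For $m\in(\mathbb{N}\cup\{\infty\})^k$, $\Omega_{k,m}$ has objects $\{p\in\mathbb{N}^k:p\le m\}$, morphisms $(p,q)$, $p\le q\le m$, $r(p,q)=p$, $s(p,q)=q$, $d(p,q)=q-p$. A graph morphism $x:\Omega_{k,m}\to\Lambda$ is a degree-preserving functor; $d(x)=m$, $x(a,b)=x((a,b))$, $x(a)=x(a,a)$. It is a boundary path if there is $n_x\in\mathbb{N}^k$, $n_x\le d(x)$, with $x(p)\Lambda^{e_i}=\emptyset$ whenever $p\in\mathbb{N}^k$, $n_x\le p\le d(x)$, $p_i=d(x)_i$; $\Lambda^{\le\infty}$ is the set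 of boundary paths. $\sigma^px(a,b)=x(a+p,b+p)$; $\lambda x$ is the concatenation of $\lambda$ and $x$. $V_\Lambda=\{(x;m):x\in\Lambda^{\le\infty},m\in\mathbb{N}^k,m\not\le d(x)\}$, $(x;m)\approx(y;p)$ iff $x(m\wedge d(x))=y(p\wedge d(y))$ and $m-m\wedge d(x)=p-p\wedge d(y)$; classes $[x;m]$ form $\widetilde{V_\Lambda}$. $P_\Lambda=\{(x;(m,n)):x\in\Lambda^{\le\infty},m\le n\in\mathbb{N}^k,n\not\le d(x)\}$, $(x;(m,n))\sim(y;(p,q))$ iff $x(m\wedge d(x),n\wedge d(x))=y(p\wedge d(y),q\wedge d(y))$, $m-m\wedge d(x)=p-p\wedge d(y)$, $n-m=q-p$; classes $[x;(m,n)]$ form $\widetilde{P_\Lambda}$. The extension $\overline{\Lambda}$ is the $k$-graph with objects $\Lambda^0\sqcup\widetilde{V_\Lambda}$ and morphisms $\Lambda\sqcup\widetilde{P_\Lambda}$: on $\Lambda$ everything is as in $\Lambda$; $\overline r([x;(m,n)])=x(m)$ if $m\le d(x)$, else $[x;m]$; $\overline s([x;(m,n)])=[x;n]$; identity at $[x;m]$ is $[x;(m,m)]$; $\lambda[x;(m,n)]=[\lambda\sigma^mx;(0,d(\lambda)+n-m)]$; $[x;(m,n)][y;(p,q)]=[z;(m,n+q-p)]$ with $z=x(0,n\wedge d(x))\sigma^{p\wedge d(y)}y$; degree $\overline d|_\Lambda=d$, $\overline d([x;(m,n)])=n-m$. *)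

From Stdlib Require List.
From mathcomp Require Import all_boot.

Set Implicit Arguments.
Unset Strict Implicit.
Unset Printing Implicit Defensive.

(* ---------- degrees: N^k and (N u {oo})^k (None = oo) ---------- *)
Definition ndeg (k : nat) := {ffun 'I_k -> nat}.
Definition edeg (k : nat) := {ffun 'I_k -> option nat}.

Section Degrees.
Variable k : nat.
Implicit Types m n p : ndeg k.
Implicit Types e : edeg k.

Definition dzero : ndeg k := [ffun => 0].
Definition dunit (i : 'I_k) : ndeg k := [ffun j => nat_of_bool (j == i)].
Definition dadd m n : ndeg k := [ffun i => m i + n i].
Definition dsub m n : ndeg k := [ffun i => m i - n i].
Definition djoin m n : ndeg k := [ffun i => maxn (m i) (n i)].
Definition dle m n : bool := [forall i, m i <= n i].
Definition dle_e m e : bool :=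
  [forall i, if e i is Some a then m i <= a else true].
Definition dmeet_e m e : ndeg k :=
  [ffun i => if e i is Some a then minn (m i) a else m i].
Definition esub e m : edeg k := [ffun i => omap (fun a => a - m i) (e i)].
Definition eadd m e : edeg k := [ffun i => omap (fun a => m i + a) (e i)].
End Degrees.

(* A countable category (composition is a total function, only meaningful on
   composable pairs src f = rng g), with a degree functor to N^k satisfying
   unique factorisation. *)
Record kgraph (k : nat) := KGraph {
  Obj : Type;
  Mor : Type;
  rng : Mor -> Obj;
  src : Mor -> Obj;
  idm : Obj -> Mor;
  comp : Mor -> Mor -> Mor;
  deg : Mor -> ndeg k;
  countable_Obj : exists f : Obj -> nat, injective f;
  countable_Mor : exists f : Mor -> nat, injective f;
  rng_idm : forall v, rng (idm v) = v;
  src_idm : forall v, src (idm v) = v;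
  idm_l : forall f, comp (idm (rng f)) f = f;
  idm_r : forall f, comp f (idm (src f)) = f;
  rng_comp : forall f g, src f = rng g -> rng (comp f g) = rng f;
  src_comp : forall f g, src f = rng g -> src (comp f g) = src g;
  comp_assoc : forall f g h, src f = rng g -> src g = rng h ->
    comp f (comp g h) = comp (comp f g) h;
  deg_idm : forall v, deg (idm v) = dzero k;
  deg_comp : forall f g, src f = rng g -> deg (comp f g) = dadd (deg f) (deg g);
  factorisation : forall l m n, deg l = dadd m n ->
    exists a b, [/\ src a = rng b, deg a = m, deg b = n, l = comp a b &
      forall a' b', src a' = rng b' -> deg a' = m -> deg b' = n ->
        l = comp a' b' -> a' = a /\ b' = b]
}.

Section KGraph.
Variable k : nat.
Variable L : kgraph k.

Local Notation Obj := (Obj L).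
Local Notation Mor := (Mor L).
Local Notation rng := (@rng k L).
Local Notation src := (@src k L).
Local Notation comp := (@comp k L).
Local Notation deg := (@deg k L).
Local Notation idm := (@idm k L).

Definition in_min (l m a b : Mor) : Prop :=
  [/\ src l = rng a, src m = rng b, comp l a = comp m b &
      deg (comp l a) = djoin (deg l) (deg m)].

Definition finitely_aligned : Prop :=
  forall l m : Mor, exists s : seq (Mor * Mor),
    forall a b, in_min l m a b -> Stdlib.Lists.List.In (a, b) s.

(* pdeg = d(x); pobj p = x(p) (object); pmap p q = x(p,q). Values outside
   the domain {p <= q <= d(x)} are irrelevant. *)
Record gpath := GPath {
  pdeg : edeg k;
  pobj : ndeg k -> Obj;
  pmap : ndeg k -> ndeg k -> Mor
}.

Definition is_gmor (x : gpath) : Prop :=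
  [/\ (forall p q, dle p q -> dle_e q (pdeg x) ->
         [/\ deg (pmap x p q) = dsub q p,
             rng (pmap x p q) = pobj x p &
             src (pmap x p q) = pobj x q]),
      (forall p, dle_e p (pdeg x) -> pmap x p p = idm (pobj x p)) &
      (forall p q r, dle p q -> dle q r -> dle_e r (pdeg x) ->
         pmap x p r = comp (pmap x p q) (pmap x q r))].

Definition is_boundary (x : gpath) : Prop :=
  is_gmor x /\
  exists nx : ndeg k, dle_e nx (pdeg x) /\
    forall p : ndeg k, dle nx p -> dle_e p (pdeg x) ->
      forall i : 'I_k, pdeg x i = Some (p i) ->
        forall l : Mor, rng l = pobj x p -> deg l <> dunit i.

Definition shift (p : ndeg k) (x : gpath) : gpath :=
  GPath (esub (pdeg x) p) (fun a => pobj x (dadd a p))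
        (fun a b => pmap x (dadd a p) (dadd b p)).

Definition is_concat (l : Mor) (x : gpath) (z : gpath) : Prop :=
  [/\ is_gmor z,
      pdeg z = eadd (deg l) (pdeg x),
      pmap z (dzero k) (deg l) = l,
      (forall a, dle_e a (pdeg x) -> pobj z (dadd a (deg l)) = pobj x a) &
      (forall a b, dle a b -> dle_e b (pdeg x) ->
         pmap z (dadd a (deg l)) (dadd b (deg l)) = pmap x a b)].

(* objects: Lambda^0 |_| V_Lambda/~ ; morphisms: Lambda |_| P_Lambda/~ ,
   represented by representatives together with the equivalences. *)
Inductive bobj := BO of Obj | BV of gpath & ndeg k.
Inductive bmor := BL of Mor | BP of gpath & ndeg k & ndeg k.

Definition valid_bobj (v : bobj) : Prop :=
  match v with
  | BO _ => True
  | BV x m => is_boundary x /\ ~~ dle_e m (pdeg x)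
  end.

Definition valid_bmor (a : bmor) : Prop :=
  match a with
  | BL _ => True
  | BP x m n => [/\ is_boundary x, dle m n & ~~ dle_e n (pdeg x)]
  end.

Definition bobj_eq (v w : bobj) : Prop :=
  match v, w with
  | BO a, BO b => a = b
  | BV x m, BV y p =>
      pobj x (dmeet_e m (pdeg x)) = pobj y (dmeet_e p (pdeg y)) /\
      dsub m (dmeet_e m (pdeg x)) = dsub p (dmeet_e p (pdeg y))
  | _, _ => False
  end.

Definition bmor_eq (a b : bmor) : Prop :=
  match a, b with
  | BL f, BL g => f = g
  | BP x m n, BP y p q =>
      [/\ pmap x (dmeet_e m (pdeg x)) (dmeet_e n (pdeg x)) =
          pmap y (dmeet_e p (pdeg y)) (dmeet_e q (pdeg y)),
          dsub m (dmeet_e m (pdeg x)) = dsub p (dmeet_e p (pdeg y)) &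
          dsub n m = dsub q p]
  | _, _ => False
  end.

Definition brng (a : bmor) : bobj :=
  match a with
  | BL f => BO (rng f)
  | BP x m _ => if dle_e m (pdeg x) then BO (pobj x m) else BV x m
  end.

Definition bsrc (a : bmor) : bobj :=
  match a with
  | BL f => BO (src f)
  | BP x _ n => BV x n
  end.

Definition bdeg (a : bmor) : ndeg k :=
  match a with
  | BL f => deg f
  | BP _ m n => dsub n m
  end.

(* bcomp_L l a c : "c represents the composite l a in \overline{Lambda}",
   for l in Lambda and a in \overline{Lambda} with s(l) = r(a):
   l [x;(m,n)] = [l sigma^m x; (0, d(l) + n - m)]. *)
Definition bcomp_L (l : Mor) (a c : bmor) : Prop :=
  bobj_eq (BO (src l)) (brng a) /\
  match a with
  | BL f => c = BL (comp l f)
  | BP x m n => exists z, is_concat l (shift m x) z /\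
                  c = BP z (dzero k) (dadd (deg l) (dsub n m))
  end.

Definition in_bmin (l m : Mor) (a b : bmor) : Prop :=
  exists c1 c2, [/\ bcomp_L l a c1, bcomp_L m b c2, bmor_eq c1 c2 &
                    bdeg c1 = djoin (deg l) (deg m)].

End KGraph.

(** If [(a, b)] is in the minimal common extensions of [l] and [m] in the
    extension and [a = [x; (p, n)]] is a new path, then [r(a) = s(l)] forces
    [p <= d(x)], while validity gives a coordinate [i] with [d(x)_i < n_i].
    In that coordinate the class [l a] has degree [(d(l) v d(m))_i] exceeding
    [d(l)_i], so [b] has degree [0] there and the Λ-part of [m b] has the full
    degree [(d(l) v d(m))_i], whereas the Λ-part of [l a] stops at the end of
    [x], strictly below it.  Hence [a] and [b] both lie in Λ, where the two
    notions of minimal common extension coincide. *)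
From Pilot Require Import Defs.
From mathcomp Require Import all_boot.
From mathcomp Require Import zify.

Set Implicit Arguments.
Unset Strict Implicit.
Unset Printing Implicit Defensive.

Section DegreeArith.
Variable k : nat.
Implicit Types (d n p r : ndeg k) (e : edeg k).

Lemma dmeet_e0 e : dmeet_e (dzero k) e = dzero k.
Proof. by apply/ffunP => i; rewrite !ffunE; case: (e i) => //= a; rewrite min0n. Qed.

Lemma dsubn0 n : dsub n (dzero k) = n.
Proof. by apply/ffunP => i; rewrite !ffunE subn0. Qed.

Lemma dle0n n : dle (dzero k) n.
Proof. by apply/forallP => i; rewrite ffunE. Qed.

Lemma dle_e_dmeet n e : dle_e (dmeet_e n e) e.
Proof. by apply/forallP => i; rewrite ffunE; case: (e i) => //= a; exact: geq_minr. Qed.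

Lemma dmeet_eadd_ge d r e i : d i <= dmeet_e (dadd d r) (eadd d e) i.
Proof. by rewrite !ffunE; case: (e i) => [a|] /=; lia. Qed.

Lemma dmeet_eadd_lt d n p e i a :
  e i = Some a -> p i <= a < n i ->
  dmeet_e (dadd d (dsub n p)) (eadd d (esub e p)) i < dadd d (dsub n p) i.
Proof. by move=> Ei; rewrite !ffunE Ei /=; lia. Qed.

End DegreeArith.

Section Extension.
Variables (k : nat) (L : kgraph k).
Implicit Types (l m f g : Mor L) (x z : gpath L) (n p : ndeg k).

Lemma deg_pmap0_meet z n :
  is_gmor z -> deg (Defs.pmap z (dzero k) (dmeet_e n (pdeg z))) = dmeet_e n (pdeg z).
Proof.
case=> degz _ _.
by have [-> _ _] := degz _ _ (dle0n _) (dle_e_dmeet n (pdeg z)); rewrite dsubn0.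
Qed.

Lemma bmor_eq_BP0 z1 z2 n1 n2 :
  is_gmor z1 -> is_gmor z2 ->
  bmor_eq (BP z1 (dzero k) n1) (BP z2 (dzero k) n2) ->
  n1 = n2 /\ dmeet_e n1 (pdeg z1) = dmeet_e n1 (pdeg z2).
Proof.
move=> gz1 gz2 [Emap _]; rewrite !dsubn0 => En; subst n2; split=> //.
by move: (congr1 (@deg k L) Emap); rewrite !dmeet_e0 !deg_pmap0_meet.
Qed.

Lemma bcomp_L_BP l x p n c :
  bcomp_L l (BP x p n) c ->
  dle_e p (pdeg x) /\
  exists2 z, is_concat l (shift p x) z & c = BP z (dzero k) (dadd (deg l) (dsub n p)).
Proof. by case=> /=; case: ifP => // le_px _ [z [hz ->]]; split=> //; exists z. Qed.

Lemma in_bmin_BL_l l m f b : in_bmin l m (BL f) b -> exists g, b = BL g.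
Proof.
case=> _ [c2 [[_ ->] h2 Ec _]].
case: b h2 => [g|y p n] h2; first by exists g.
by have [_ [z _ Ec2]] := bcomp_L_BP h2; rewrite Ec2 in Ec.
Qed.

Lemma in_bmin_BLE l m f g : in_bmin l m (BL f) (BL g) <-> in_min l m f g.
Proof.
split; first by case=> _ [_ [[? ->] [? ->] /= Ec Edeg]].
by case=> ? ? Ec Edeg; exists (BL (Defs.comp l f)), (BL (Defs.comp m g)).
Qed.

Lemma in_bmin_BP_l l m x p n b : valid_bmor (BP x p n) -> ~ in_bmin l m (BP x p n) b.
Proof.
case=> _ _ /forallPn [i n_escapes] [c1 [c2 [h1 h2 Ec Edeg]]].
have [le_px [z hz Ec1]] := bcomp_L_BP h1; subst c1.
case: b h2 Ec => [g|y p' n'] h2 Ec; first by case: h2 => _ Ec2; rewrite Ec2 in Ec.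
have [_ [z2 hz2 Ec2]] := bcomp_L_BP h2; subst c2.
case: hz => gz dz _ _ _; case: hz2 => gz2 dz2 _ _ _.
have [EN Emeet] := bmor_eq_BP0 gz gz2 Ec.
set N := dadd (deg l) (dsub n p) in Edeg EN Emeet.
move: n_escapes (forallP le_px i).
case Exi: (pdeg x i) => [a|] //= n_escapes le_pia.
have meet_lt : dmeet_e N (pdeg z) i < N i.
  by rewrite dz; apply: (dmeet_eadd_lt _ Exi); lia.
have N_deg_m : N i = deg m i.
  by move: (congr1 (fun d : ndeg k => d i) Edeg); rewrite /N !ffunE /=; lia.
have meet_ge : deg m i <= dmeet_e N (pdeg z2) i.
  by rewrite {1}EN dz2; exact: dmeet_eadd_ge.
by move: meet_lt; rewrite Emeet; lia.
Qed.

End Extension.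

Theorem lemma3p25 (k : nat) (L : kgraph k) :
  finitely_aligned L ->
  forall (l m : Mor L) (a b : bmor L),
    valid_bmor a -> valid_bmor b ->
    (in_bmin l m a b <->
     exists a' b' : Mor L, [/\ a = BL a', b = BL b' & in_min l m a' b']).
Proof.
move=> _ l m a b va _; split; last by case=> f [g [-> -> /in_bmin_BLE]].
case: a va => [f|x p n] va hmin; last by case: (in_bmin_BP_l va hmin).
have [g Eb] := in_bmin_BL_l hmin; subst b.
by exists f, g; split=> //; apply/in_bmin_BLE.
Qed.
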